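(* Let $G$ be a finite group (written additively, not necessarily abelian), let $f:G\to G$, and let $S\subseteq G$ with $\#S=k\ge u(f)$. For each function $g:G\to G$ satisfying (a) $\mathrm{Im}(g)=S$ and (b) $g(x)\ne g(y)$ whenever $x\ne y$ and $f(x)=f(y)$, let $\mathcal{A}_g=\{(r,c)\in G\times \mathrm{Im}(f): \exists x\in G \text{ with } f(x)=c,\ g(x)+f(x)=r\}$. Then $g\mapsto \mathcal{A}_g$ maps the set of functions satisfying (a) and (b) onto the set of all admissible subtables of $M_f$ with value set $S$, and each admissible subtable with value set $S$ is the image of exactly $\prod_{t=1}^{u(f)} (t!)^{\#P_t}$ such functions $g$. Moreover, if two such functions $g,h$ have $\mathcal{A}_g=\mathcal{A}_h$, then $\mathrm{Im}(g)=\mathrm{Im}(h)$ and $\mathrm{Im}(g+f)=\mathrm{Im}(h+f)$.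
   Context: For $f:G\to G$: $\mathrm{Im}(f)=\{f(x):x\in G\}$; $\mathrm{Preim}(f,b)=\{x\in G: f(x)=b\}$; $u(f)=\max_{b\in G}\#\mathrm{Preim}(f,b)$; for $0\le t\le u(f)$, $P_t=\{b\in G:\#\mathrm{Preim}(f,b)=t\}$. The subtraction table $M_f$ has rows indexed by $G$ and columns indexed by $\mathrm{Im}(f)$, with entry $m_{r,c}=r-c$ (i.e. $r+(-c)$) in position $(r,c)$. A subtable is any set $\mathcal{A}$ of positions $(r,c)\in G\times\mathrm{Im}(f)$ (the entry at that position being $m_{r,c}$). A subtable $\mathcal{A}$ is an admissible subtable with value set $S$ if (A1) $\{m_{r,c}:(r,c)\in\mathcal{A}\}=S$, and (A2) for every $c\in\mathrm{Im}(f)$ there are exactly $\#\mathrm{Preim}(f,c)$ elements $r\in G$ with $(r,c)\in\mathcal{A}$. Functions $g+f$ are taken pointwise. *)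

(* G is a finite group, modelled as the whole of a
   finGroupType gT; the paper's additive notation x + y is written x * y,
   -c is c^-1, so r - c = r + (-c) is r * c^-1. *)
From mathcomp Require Import all_boot all_fingroup.
Set Implicit Arguments. Unset Strict Implicit. Unset Printing Implicit Defensive.
Local Open Scope group_scope.

Section Defs.
Variable gT : finGroupType.

Definition Im (f : gT -> gT) : {set gT} := [set f x | x : gT].
Definition Preim (f : gT -> gT) (b : gT) : {set gT} := [set x | f x == b].
Definition u (f : gT -> gT) : nat := \max_(b : gT) #|Preim f b|.
Definition Pt (f : gT -> gT) (t : nat) : {set gT} :=
  [set b | #|Preim f b| == t].
(* entry m_{r,c} = r - c = r + (-c) *)
Definition mentry (r c : gT) : gT := r * c^-1.

Definition admissible (f : gT -> gT) (A : {set gT * gT}) (S : {set gT}) : Prop :=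
  [/\ A \subset setX [set: gT] (Im f),
      [set mentry p.1 p.2 | p in A] = S &
      forall c, c \in Im f -> #|[set r | (r, c) \in A]| = #|Preim f c| ].

Definition goodg (f : gT -> gT) (S : {set gT}) (g : {ffun gT -> gT}) : bool :=
  (Im g == S) &&
  [forall x, forall y, ((x != y) && (f x == f y)) ==> (g x != g y)].

Definition Ag (f : gT -> gT) (g : {ffun gT -> gT}) : {set gT * gT} :=
  [set p : gT * gT | (p.2 \in Im f) &&
     [exists x, (f x == p.2) && (g x * f x == p.1)]].

End Defs.

(* Fix an admissible subtable A and let D c be the set of values in column c
   of A; admissibility gives #|D c| = #|Preim f c|.  A function g satisfies
   (a), (b) and A_g = A exactly when, on every fibre Preim f c, it is
   injective with values in D c, i.e. a bijection Preim f c -> D c: then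
   A_g is contained in A with columns of the same heights, and (a) follows
   because the values of A_g are those of A.  Counting maps that are
   injective on fibres with values in prescribed sets, one point at a time,
   gives prod_c #|Preim f c|!, which regrouped by fibre size is
   prod_t (t!)^#|P_t|; it is positive, whence surjectivity.  The values and
   the rows of A_g are Im g and Im (g + f). *)

From mathcomp Require Import all_boot all_fingroup.
Set Implicit Arguments. Unset Strict Implicit. Unset Printing Implicit Defensive.

Section FiberInjections.
Variables (aT cT rT : finType) (f : aT -> cT) (D : cT -> {set rT}) (y0 : rT).

Definition fiber (X : {set aT}) (c : cT) : {set aT} := [set x in X | f x == c].

Definition fiber_injb (X : {set aT}) (g : aT -> rT) : bool :=
  [forall x in X, forall y in X, (f x == f y) ==> (g x == g y) ==> (x == y)].

Lemma fiber_injbP (X : {set aT}) (g : aT -> rT) :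
  reflect {in X &, forall x y, f x = f y -> g x = g y -> x = y} (fiber_injb X g).
Proof.
apply: (iffP forall_inP) => [gX x y xX yX fxy gxy | gX x xX].
  by have /forall_inP/(_ y yX) := gX x xX; rewrite fxy gxy !eqxx => /eqP.
apply/forall_inP=> y yX; apply/implyP=> /eqP fxy.
by apply/implyP=> /eqP/(gX x y xX yX fxy)->.
Qed.

Definition fiber_injections (X : {set aT}) : {set {ffun aT -> rT}} :=
  [set g in pfamily y0 X (fun x => D (f x)) | fiber_injb X g].

Definition ffun_upd (g : {ffun aT -> rT}) (a : aT) (v : rT) : {ffun aT -> rT} :=
  [ffun x => if x == a then v else g x].

Lemma ffun_upd_id (g : {ffun aT -> rT}) a v : g a = v -> ffun_upd g a v = g.
Proof. by move=> <-; apply/ffunP=> x; rewrite ffunE; case: eqP => [->|]. Qed.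

Lemma ffun_upd_upd (g : {ffun aT -> rT}) a v w :
  ffun_upd (ffun_upd g a v) a w = ffun_upd g a w.
Proof. by apply/ffunP=> x; rewrite !ffunE; case: eqP. Qed.

Section Step.
Variables (X : {set aT}) (a : aT).
Hypothesis aX : a \in X.
Let X' := X :\ a.

Lemma ffun_upd_fiber_injections (g : {ffun aT -> rT}) :
  g \in fiber_injections X -> ffun_upd g a y0 \in fiber_injections X'.
Proof.
rewrite !inE => /andP[/pfamilyP[/supportP g_supp gD] /fiber_injbP g_inj].
apply/andP; split.
  apply/pfamilyP; split=> [|x]; first apply/supportP=> x.
    by rewrite !inE ffunE negb_and negbK; case: eqP => //= _ /g_supp.
  by rewrite !inE ffunE => /andP[/negbTE-> /gD].
apply/fiber_injbP=> x y; rewrite !inE !ffunE => /andP[/negbTE-> xX] /andP[/negbTE-> yX].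
exact: g_inj.
Qed.

Lemma fiber_injections_extend (h : {ffun aT -> rT}) : h \in fiber_injections X' ->
  [set g in fiber_injections X | ffun_upd g a y0 == h] =
  ffun_upd h a @: (D (f a) :\: h @: fiber X' (f a)).
Proof.
rewrite !inE => /andP[/pfamilyP[/supportP h_supp hD] /fiber_injbP h_inj].
have ha : h a = y0 by apply: h_supp; rewrite !inE eqxx.
apply/setP=> g; apply/idP/imsetP.
  rewrite !inE => /andP[/andP[/pfamilyP[/supportP g_supp gD] /fiber_injbP g_inj] /eqP <-].
  exists (g a); last by apply/ffunP=> x; rewrite !ffunE; case: eqP => [->|].
  rewrite !inE gD // andbT; apply/imsetP=> -[y]; rewrite !inE ffunE.
  case/andP=> /andP[/negbTE ya yX] /eqP fy; rewrite ya => /g_inj gy.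
  by move/negbT: ya; rewrite gy ?eqxx.
case=> v /setDP[vD vW] ->{g}.
rewrite in_set ffun_upd_upd (ffun_upd_id ha) eqxx andbT in_set.
apply/andP; split.
  apply/pfamilyP; split=> [|x xX]; first apply/supportP=> x xX.
    rewrite ffunE; case: eqP => [xa|_]; first by rewrite xa aX in xX.
    by apply: h_supp; rewrite !inE negb_and xX orbT.
  rewrite ffunE; case: eqP => [->//|/eqP xa].
  by apply: hD; rewrite !inE xa.
have vW' y : y \in X' -> f y = f a -> h y != v.
  by move=> yX fy; apply: contraNneq vW => <-; apply: imset_f; rewrite inE yX fy eqxx.
apply/fiber_injbP=> x y xX yX; rewrite !ffunE.
case: (x =P a) => [->|/eqP xa]; case: (y =P a) => [->|/eqP ya] //.
- by move=> fy /esym/eqP; rewrite (negbTE (vW' y _ _)) // !inE ya.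
- by move=> fx /eqP; rewrite (negbTE (vW' x _ _)) // !inE xa.
- by apply: h_inj; rewrite !inE ?xa ?ya.
Qed.

Lemma card_fiber_injections_extend (h : {ffun aT -> rT}) :
  h \in fiber_injections X' ->
  #|[set g in fiber_injections X | ffun_upd g a y0 == h]|
    = #|D (f a)| - #|fiber X' (f a)|.
Proof.
move=> hX'; rewrite fiber_injections_extend // card_in_imset; last first.
  by move=> v w _ _ /ffunP/(_ a); rewrite !ffunE eqxx.
move: hX'; rewrite !inE => /andP[/pfamilyP[_ hD] /fiber_injbP h_inj].
rewrite cardsD; have /setIidPr-> : h @: fiber X' (f a) \subset D (f a).
  by apply/subsetP=> z /imsetP[y /setIdP[yX /eqP <-] ->]; apply: hD.
rewrite card_in_imset // => x y; rewrite !inE.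
by case/andP=> xX /eqP fx /andP[yX /eqP fy]; apply: h_inj; rewrite ?inE ?fx ?fy.
Qed.

Lemma card_fiber_injections_step :
  #|fiber_injections X|
    = #|fiber_injections X'| * (#|D (f a)| - #|fiber X' (f a)|).
Proof.
pose reset g := ffun_upd g a y0.
rewrite -sum1_card (partition_big reset (mem (fiber_injections X'))) /=; last first.
  exact: ffun_upd_fiber_injections.
rewrite -sum_nat_const; apply: eq_bigr => h hX'.
rewrite -(card_fiber_injections_extend hX') -sum1_card.
by apply: eq_bigl => g; rewrite inE.
Qed.

End Step.

Lemma card_fiber_injections (X : {set aT}) :
  #|fiber_injections X| = \prod_c #|D c| ^_ #|fiber X c|.
Proof.
have [n] := ubnP #|X|; elim: n X => // n IHn X.
have [-> _ | [a aX] ltXn] := set_0Vmem X.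
  rewrite big1 => [|c _]; last first.
    by rewrite (_ : fiber set0 c = set0) ?cards0 //; apply/setP=> x; rewrite !inE.
  have := card_pfamily y0 set0 (fun x => mem (D (f x))).
  rewrite /image_mem enum_set0 /= => <-.
  apply: eq_card => g; rewrite inE andb_idr // => _.
  by apply/fiber_injbP=> x; rewrite inE.
rewrite (card_fiber_injections_step aX) IHn; last by rewrite (cardsD1 a X) aX in ltXn.
rewrite (bigD1 (f a)) // [in RHS](bigD1 (f a)) //= mulnAC -ffactnSr; congr (_ ^_ _ * _).
  rewrite [in RHS](cardsD1 a) [a \in _]inE aX eqxx; congr (_.+1); apply: eq_card => x.
  by rewrite !inE andbA.
apply: eq_bigr => c fac; congr (_ ^_ _); apply: eq_card => x; rewrite !inE.
by case: (x =P a) => [->|] //=; rewrite eq_sym (negbTE fac) andbF.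
Qed.

End FiberInjections.

Lemma prodn_by_values (T : finType) (n : T -> nat) (F : nat -> nat) (N : nat) :
  (forall c, n c <= N) ->
  \prod_c F (n c) = \prod_(0 <= t < N.+1) F t ^ #|[set c | n c == t]|.
Proof.
move=> n_le; rewrite big_mkord.
rewrite (partition_big (fun c => inord (n c) : 'I_N.+1) xpredT) //=.
apply: eq_bigr => t _; rewrite -prod_nat_const; apply: eq_big => [c | c /eqP <-].
  by rewrite inE -val_eqE /= inordK ?ltnS.
by rewrite inordK ?ltnS.
Qed.

Local Open Scope group_scope.

Section SubtractionTable.
Variables (gT : finGroupType) (f : gT -> gT).

Lemma mem_Ag (g : {ffun gT -> gT}) r c :
  ((r, c) \in Ag f g) = [exists x, (f x == c) && (g x * c == r)].
Proof.
rewrite inE /=; apply/andP/existsP => [[_ /existsP[x]] | [x]] /andP[/eqP fx e].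
  by exists x; rewrite fx eqxx -fx.
by split; [rewrite -fx imset_f | apply/existsP; exists x; rewrite fx eqxx].
Qed.

Lemma Ag_subset (g : {ffun gT -> gT}) : Ag f g \subset setX [set: gT] (Im f).
Proof. by apply/subsetP=> -[r c]; rewrite !inE => /andP[]. Qed.

Lemma mentry_Ag (g : {ffun gT -> gT}) : [set mentry p.1 p.2 | p in Ag f g] = Im g.
Proof.
apply/setP=> v; apply/imsetP/imsetP => [[[r c]]|[x _ ->]].
  rewrite mem_Ag => /existsP[x /andP[/eqP <- /eqP <-]] ->.
  by exists x; rewrite // /mentry mulgK.
exists (g x * f x, f x); last by rewrite /mentry mulgK.
by rewrite mem_Ag; apply/existsP; exists x; rewrite !eqxx.
Qed.

Lemma rows_Ag (g : {ffun gT -> gT}) :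
  [set p.1 | p in Ag f g] = Im (fun x => g x * f x).
Proof.
apply/setP=> v; apply/imsetP/imsetP => [[[r c]]|[x _ ->]].
  by rewrite mem_Ag => /existsP[x /andP[/eqP <- /eqP <-]] ->; exists x.
by exists (g x * f x, f x); rewrite // mem_Ag; apply/existsP; exists x; rewrite !eqxx.
Qed.

Lemma card_col_Ag (g : {ffun gT -> gT}) c : fiber_injb f [set: gT] g ->
  #|[set r | (r, c) \in Ag f g]| = #|Preim f c|.
Proof.
move=> /fiber_injbP g_inj.
have -> : [set r | (r, c) \in Ag f g] = [set g x * c | x in Preim f c].
  apply/setP=> r; rewrite inE mem_Ag; apply/existsP/imsetP => [[x]|[x]].
    by case/andP=> fx /eqP <-; exists x; rewrite ?inE.
  by rewrite inE => fx ->; exists x; rewrite fx eqxx.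
apply: card_in_imset => x y; rewrite !inE => /eqP fx /eqP fy /mulIg.
by apply: g_inj; rewrite ?inE ?fx ?fy.
Qed.

Lemma goodgP (S : {set gT}) (g : {ffun gT -> gT}) :
  reflect (Im g = S /\ fiber_injb f [set: gT] g) (goodg f S g).
Proof.
apply: (iffP andP) => -[/eqP-> g_inj]; split=> //.
  apply/fiber_injbP=> x y _ _ fxy gxy; apply/eqP/negPn/negP => xy.
  by move: g_inj => /forallP/(_ x)/forallP/(_ y); rewrite xy fxy gxy !eqxx.
apply/forallP=> x; apply/forallP=> y; apply/implyP=> /andP[xy /eqP fxy].
by apply: contra xy => /eqP gxy; apply/eqP; move/fiber_injbP: g_inj; apply; rewrite ?inE.
Qed.

Lemma Ag_admissible (S : {set gT}) (g : {ffun gT -> gT}) :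
  goodg f S g -> admissible f (Ag f g) S.
Proof.
case/goodgP=> <- g_inj; split; first exact: Ag_subset.
  exact: mentry_Ag.
by move=> c _; apply: card_col_Ag.
Qed.

Section Admissible.
Variables (S : {set gT}) (A : {set gT * gT}).
Hypothesis A_adm : admissible f A S.

Definition col_values (c : gT) : {set gT} := [set v | (v * c, c) \in A].

Lemma card_col_values c : #|col_values c| = #|Preim f c|.
Proof.
case: A_adm => A_sub _ A_col.
have -> : col_values c = [set r * c^-1 | r in [set r | (r, c) \in A]].
  apply/setP=> v; rewrite inE; apply/idP/imsetP => [vA | [r]].
    by exists (v * c); rewrite ?inE ?mulgK.
  by rewrite inE => rA ->; rewrite mulgKV.
rewrite card_imset; last exact: mulIg.
have [/A_col // | cNf] := boolP (c \in Im f).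
have Preim0 : Preim f c = set0.
  by apply/setP=> x; rewrite !inE; apply: contraNF cNf => /eqP <-; apply: imset_f.
rewrite Preim0 cards0; apply/eqP; rewrite cards_eq0; apply/eqP/setP=> r; rewrite !inE.
by apply: contraNF cNf => /(subsetP A_sub); rewrite !inE.
Qed.

Lemma Ag_eq_of_subset (g : {ffun gT -> gT}) :
  fiber_injb f [set: gT] g -> Ag f g \subset A -> Ag f g = A.
Proof.
move=> g_inj gA; apply/eqP; rewrite eqEsubset gA; apply/subsetP=> -[r c] rcA.
case: A_adm => A_sub _ A_col.
have cf : c \in Im f by move/subsetP/(_ _ rcA): A_sub; rewrite !inE.
have col_sub : [set r | (r, c) \in Ag f g] \subset [set r | (r, c) \in A].
  by apply/subsetP=> r1; rewrite [r1 \in _]inE [r1 \in _]inE; apply: (subsetP gA).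
move: col_sub; rewrite subEproper properEcard card_col_Ag // A_col // ltnn andbF orbF.
by move=> /eqP/setP/(_ r); rewrite !inE rcA.
Qed.

Lemma goodg_Ag_eqE (g : {ffun gT -> gT}) :
  (goodg f S g && (Ag f g == A)) = (g \in fiber_injections f col_values 1 [set: gT]).
Proof.
apply/andP/idP => [[/goodgP[_ g_inj] /eqP AgA] | ].
  rewrite inE g_inj andbT; apply/pfamilyP; split=> [|x _].
    by apply/supportP=> x; rewrite inE.
  by rewrite inE -AgA mem_Ag; apply/existsP; exists x; rewrite !eqxx.
rewrite inE => /andP[/pfamilyP[_ gA] g_inj].
have AgA : Ag f g = A.
  apply: Ag_eq_of_subset => //; apply/subsetP=> -[r c].
  rewrite mem_Ag => /existsP[x /andP[/eqP <- /eqP <-]].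
  by have := gA x (in_setT x); rewrite inE.
case: A_adm => _ A_vals _.
by rewrite AgA eqxx; split=> //; apply/goodgP; rewrite -mentry_Ag AgA A_vals.
Qed.

Lemma card_goodg_Ag_eq :
  #|[set g : {ffun gT -> gT} | goodg f S g && (Ag f g == A)]|
    = (\prod_c #|Preim f c|`!)%N.
Proof.
rewrite (eq_card (B := fiber_injections f col_values 1 [set: gT])); last first.
  by move=> g; rewrite inE goodg_Ag_eqE.
rewrite card_fiber_injections; apply: eq_bigr => c _.
rewrite card_col_values (_ : fiber f [set: gT] c = Preim f c) ?ffactnn //.
by apply/setP=> x; rewrite !inE.
Qed.

End Admissible.
End SubtractionTable.

Unset Implicit Arguments. Set Strict Implicit.

Theorem lemma2p1 (gT : finGroupType) (f : gT -> gT) (S : {set gT}) :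
  (u f <= #|S|)%N ->
  [/\ (forall g : {ffun gT -> gT}, goodg f S g -> admissible f (Ag f g) S),
      (forall A : {set gT * gT}, admissible f A S ->
         exists g : {ffun gT -> gT}, goodg f S g /\ Ag f g = A),
      (forall A : {set gT * gT}, admissible f A S ->
         #|[set g : {ffun gT -> gT} | goodg f S g && (Ag f g == A)]|
           = (\prod_(1 <= t < (u f).+1) t`! ^ #|Pt f t|)%N)
    & (forall g h : {ffun gT -> gT}, goodg f S g -> goodg f S h ->
         Ag f g = Ag f h ->
         Im g = Im h /\ Im (fun x => g x * f x) = Im (fun x => h x * f x))].
Proof.
(* Unused: any admissible subtable already forces it, since a column of
   height [u f] carries [u f] distinct values of [S]. *)
move=> _; split.
- by move=> g; apply: Ag_admissible.
- move=> A A_adm; have : 0 < #|[set g | goodg f S g && (Ag f g == A)]|.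
    by rewrite (card_goodg_Ag_eq A_adm) prodn_gt0 // => c; apply: fact_gt0.
  by rewrite card_gt0 => /set0Pn[g]; rewrite inE => /andP[gS /eqP gA]; exists g.
- move=> A A_adm; rewrite (card_goodg_Ag_eq A_adm) (prodn_by_values _ (N := u f)).
    by rewrite big_ltn // fact0 exp1n mul1n.
  by move=> c; apply: leq_bigmax.
- move=> g h _ _ gh.
  by rewrite -(mentry_Ag f g) gh mentry_Ag -(rows_Ag f g) gh rows_Ag.
Qed.
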